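(* Let $\ell\ge1$ and let $C=(w_1,\dots,w_{2\ell+1})$ be a semi-valid tuple in $\Omega_n$. Then the edge set of $H_n^{(2)}(C)$ consists exactly of the pairs $\{w_i,w_{i+1}\}$ for $1\le i\le 2\ell+1$ together with all pairs $\{v,w_i\}$ with $v\in(w_{i-1},w_{i+1})$, $1\le i\le 2\ell+1$ (indices of the $w$'s mod $2\ell+1$). In particular $|H_n^{(2)}(C)|=n$.
   Context: $\Omega_n=\{v_0,\dots,v_{n-1}\}$ with cyclic order $v_0<v_1<\dots<v_{n-1}<v_0$ (indices mod $n$). For distinct vertices $u,w$, $(u,w)$ is the set of vertices strictly between $u$ and $w$ when moving clockwise (increasing index mod $n$) from $u$ to $w$, and $[u,w]=(u,w)\cup\{u,w\}$. A tuple $C=(w_1,\dots,w_{2\ell+1})$ of distinct vertices is semi-valid if $w_1<w_3<w_5<\dots<w_{2\ell+1}<w_2<w_4<\dots<w_{2\ell}<w_1$, meaning these vertices appear in this clockwise cyclic order. For such $C$ and $r\ge2$, $H_n^{(r)}(C)=\{e\in\binom{\Omega_n}{r}: e\cap[w_i,w_{i-1}]\neq\emptyset\ \text{for all } i\in\{1,\dots,2\ell+1\}\}$, with indices of the $w$'s taken mod $2\ell+1$ (so $[w_1,w_0]=[w_1,w_{2\ell+1}]$). *)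

From mathcomp Require Import all_boot.
Set Implicit Arguments. Unset Strict Implicit. Unset Printing Implicit Defensive.

(* Omega_n = {v_0,...,v_{n-1}} is modelled by 'I_n (v_k = k), cyclic order by
   increasing index mod n. *)

Definition cdist (n : nat) (u x : 'I_n) : nat := (x + n - u) %% n.

(* x \in (u, w): strictly between u and w moving clockwise from u *)
Definition cyc_open (n : nat) (u w x : 'I_n) : bool :=
  (0 < cdist u x) && (cdist u x < cdist u w).

Definition cyc_closed (n : nat) (u w x : 'I_n) : bool :=
  [|| x == u, x == w | cyc_open u w x].

(* A tuple C = (w_1, ..., w_{2l+1}) is given 0-based as w : 'I_(2l+1) -> 'I_n
   (w_{k+1} in the paper is w k here).  wat w k = w_{(k mod (2l+1)) + 1}. *)
Definition wat (n l : nat) (w : 'I_(l.*2.+1) -> 'I_n) (k : nat) : 'I_n :=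
  w (Ordinal (@ltn_pmod k l.*2.+1 (ltn0Sn _))).

(* the sequence w_1, w_3, ..., w_{2l+1}, w_2, w_4, ..., w_{2l} (paper indexing) *)
Definition sv_seq (n l : nat) (w : 'I_(l.*2.+1) -> 'I_n) : seq 'I_n :=
  [seq wat w (2 * j) | j <- iota 0 l.+1] ++ [seq wat w (2 * j + 1) | j <- iota 0 l].

(* semi-valid: the w's are distinct and appear in the above clockwise cyclic order,
   i.e. their clockwise distances from w_1 strictly increase along the sequence. *)
Definition semi_valid (n l : nat) (w : 'I_(l.*2.+1) -> 'I_n) : bool :=
  uniq (sv_seq w) &&
  sorted ltn [seq cdist (wat w 0) x | x <- sv_seq w].

(* H_n^{(2)}(C): 2-subsets meeting every [w_i, w_{i-1}] *)
Definition H2 (n l : nat) (w : 'I_(l.*2.+1) -> 'I_n) : {set {set 'I_n}} :=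
  [set e : {set 'I_n} | (#|e| == 2) &&
     [forall i : 'I_(l.*2.+1),
        [exists x in e, cyc_closed (wat w i) (wat w (i + l.*2)) x]]].

From mathcomp Require Import all_boot zify.
Set Implicit Arguments. Unset Strict Implicit. Unset Printing Implicit Defensive.

(* Listing the w's clockwise from w_1 gives anchors a_0, ..., a_{2l}; the
   tuple entry w_{k+1} is the anchor a_{pos k} with pos k = k(l+1) mod (2l+1),
   so consecutive entries are l+1 anchor steps apart and every arc
   [w_i, w_{i-1}] spans exactly l anchor steps.  Each vertex x lies on an anchor
   or in the gap after one; recording that anchor ('block x') and whether x is
   the anchor itself ('anchored x') turns arc membership into the test
   cdist c (block x) < cdist c d + anchored x  inside Z/(2l+1) (anchor_arc).
   The combinatorial core (pair_cover) then says that two vertices meet every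
   arc of length l iff one of them is the anchor l+1 steps after the other's
   block.  So the edges are exactly edge x = {x, partner x}, one per vertex x,
   and edge is injective, which gives |H| = n; translating positions back to
   tuple indices yields the two families of edges of the statement. *)

Lemma modn_below_double n x : x < n.*2 -> x %% n = (if x < n then x else x - n).
Proof.
move=> lt_x2n; case: ltnP => [lt_xn|le_nx]; first by rewrite modn_small.
by rewrite -{1}(subnK le_nx) modnDr modn_small; lia.
Qed.

Section CyclicDistance.
Variable n : nat.
Implicit Types o u v w x y : 'I_n.

Lemma cdistE u x : cdist u x = if u <= x then x - u else x + n - u.
Proof.
have ltu := ltn_ord u; have ltx := ltn_ord x.
by rewrite /cdist modn_below_double; repeat case: ifP => ?; lia.
Qed.

Lemma cdist_lt u x : cdist u x < n.
Proof. by have := ltn_ord x; have := ltn_ord u; rewrite cdistE; case: ifP; lia. Qed.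

Lemma cdistxx u : cdist u u = 0.
Proof. by rewrite cdistE leqnn subnn. Qed.

Lemma cdist_inj u x y : cdist u x = cdist u y -> x = y.
Proof.
have := ltn_ord x; have := ltn_ord y; have := ltn_ord u.
rewrite !cdistE => ? ? ? eq_d; apply: ord_inj; move: eq_d.
by repeat case: ifP => ?; lia.
Qed.

Lemma cdist_injl u v x : cdist u x = cdist v x -> u = v.
Proof.
have := ltn_ord x; have := ltn_ord v; have := ltn_ord u.
rewrite !cdistE => ? ? ? eq_d; apply: ord_inj; move: eq_d.
by repeat case: ifP => ?; lia.
Qed.

Lemma cdist_rebase o u x : cdist u x =
  if cdist o u <= cdist o x then cdist o x - cdist o u else cdist o x + n - cdist o u.
Proof.
have := ltn_ord x; have := ltn_ord u; have := ltn_ord o.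
rewrite !cdistE => ? ? ?; case: (leqP o u) => ?; case: (leqP o x) => ?;
  by repeat case: ifP => ?; lia.
Qed.

Lemma cdist_onto x k : k < n -> exists u, cdist u x = k.
Proof.
move=> lt_kn; have lt0n : 0 < n by apply: leq_ltn_trans lt_kn.
exists (Ordinal (ltn_pmod (x + n - k) lt0n)); rewrite cdistE /=.
have ltx := ltn_ord x; rewrite modn_below_double; last by lia.
by case: (ltnP (x + n - k) n) => ? /=; case: ifP => ?; lia.
Qed.

Lemma cyc_openE o u w x : cyc_open u w x =
  if cdist o u <= cdist o w then (cdist o u < cdist o x) && (cdist o x < cdist o w)
  else (cdist o u < cdist o x) || (cdist o x < cdist o w).
Proof.
rewrite /cyc_open (cdist_rebase o u x) (cdist_rebase o u w).
have := cdist_lt o x; have := cdist_lt o u; have := cdist_lt o w.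
move: (cdist o x) (cdist o u) (cdist o w) => t a b ? ? ?.
by repeat case: ifP => ?; lia.
Qed.

Definition cshift u k : 'I_n :=
  Ordinal (ltn_pmod (u + k) (leq_ltn_trans (leq0n u) (ltn_ord u))).

Lemma cshiftD u a b : cshift (cshift u a) b = cshift u (a + b).
Proof. by apply: ord_inj; rewrite /= modnDml addnA. Qed.

Lemma cdist_cshift u k : cdist u (cshift u k) = k %% n.
Proof.
rewrite /cdist /=; apply/eqP; rewrite -(eqn_modDr u) subnK; last first.
  by apply: leq_trans (ltnW (ltn_ord u)) (leq_addl _ _).
by rewrite modnDr modn_mod addnC.
Qed.

Lemma cshift_injl u v k : cshift u k = cshift v k -> u = v.
Proof.
move=> eq_uv; apply: (@cdist_injl _ _ (cshift u k)).
by rewrite {2}eq_uv !cdist_cshift.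
Qed.
End CyclicDistance.

(* Anchors p_0, ..., p_k lying in strictly clockwise order from p_0 cut the
   circle into gaps; every point x is described by the last anchor p_(block x)
   not after it and by whether x is that anchor. *)
Section Anchors.
Variables (n k : nat) (p : 'I_k.+1 -> 'I_n).
Local Notation o := (p ord0).
Hypothesis p_incr : forall i j : 'I_k.+1, i < j -> cdist o (p i) < cdist o (p j).

Definition block (x : 'I_n) : 'I_k.+1 :=
  [arg max_(j > ord0 | cdist o (p j) <= cdist o x) j].

Definition anchored (x : 'I_n) : bool := x == p (block x).

Lemma anchor_leq i j : (cdist o (p i) <= cdist o (p j)) = (i <= j).
Proof.
case: (ltngtP i j) => [/p_incr/ltnW -> //|/p_incr lt_ji|/ord_inj ->]; last exact: leqnn.
by apply/negbTE; rewrite -ltnNge.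
Qed.

Lemma block_leq x j : (cdist o (p j) <= cdist o x) = (j <= block x).
Proof.
rewrite /block; case: arg_maxnP => [|b le_b max_b]; first by rewrite cdistxx.
apply/idP/idP => [/max_b //|le_jb].
by apply: leq_trans le_b; rewrite anchor_leq.
Qed.

Lemma block_anchor j : block (p j) = j.
Proof.
have le_bj : block (p j) <= j by rewrite -anchor_leq block_leq.
have le_jb : j <= block (p j) by rewrite -block_leq.
by apply: ord_inj; apply/eqP; rewrite eqn_leq le_bj.
Qed.

Lemma anchored_anchor j : anchored (p j).
Proof. by rewrite /anchored block_anchor. Qed.

Lemma eq_anchor x j : (x == p j) = (block x == j :> nat) && anchored x.
Proof.
apply/eqP/andP => [->|[/eqP/ord_inj <- /eqP //]].
by rewrite block_anchor anchored_anchor.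
Qed.

(* Comparing x with an anchor amounts to comparing (block x, ~~ anchored x)
   lexicographically with (j, false). *)
Lemma dist_lt_anchor x j : (cdist o x < cdist o (p j)) = (block x < j).
Proof. by rewrite ltnNge block_leq -ltnNge. Qed.

Lemma anchor_lt_dist x j :
  (cdist o (p j) < cdist o x) = (j < block x) || (j == block x :> nat) && ~~ anchored x.
Proof.
rewrite ltn_neqAle block_leq (inj_eq (@cdist_inj _ o)) eq_sym eq_anchor.
by case: (anchored x); lia.
Qed.

(* x lies on the closed arc between two anchors iff its block does, the block
   of an unanchored x being allowed only strictly before the end anchor. *)
Lemma anchor_arc c d x :
  cyc_closed (p c) (p d) x = (cdist c (block x) < cdist c d + anchored x).
Proof.
rewrite /cyc_closed (cyc_openE o) !eq_anchor anchor_leq !dist_lt_anchor !anchor_lt_dist.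
have := ltn_ord c; have := ltn_ord d; have := ltn_ord (block x).
rewrite !cdistE; move: (block x) (anchored x) => b a.
by case: a; repeat case: ifP => ?; lia.
Qed.

Lemma anchor_gap c d x : cdist c d = 1 ->
  cyc_open (p c) (p d) x = (block x == c :> nat) && ~~ anchored x.
Proof.
rewrite (cyc_openE o) anchor_leq !dist_lt_anchor !anchor_lt_dist.
have := ltn_ord c; have := ltn_ord d; have := ltn_ord (block x).
rewrite !cdistE; move: (block x) (anchored x) => b a.
by case: a; repeat case: ifP => ?; lia.
Qed.
End Anchors.

(* The covering problem in Z/(2l+1): a point is a block b with a flag u, and the
   arc starting at c contains it iff cdist c b < l + u. *)
Section PairCover.
Variable l : nat.
Local Notation m := l.*2.+1.
Implicit Types b c : 'I_m.

Lemma cover_by_partner b1 b2 (u1 : bool) : cdist b1 b2 = l.+1 ->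
  forall c, (cdist c b1 < l + u1) || (cdist c b2 < l + true).
Proof.
move=> d_12 c; move: d_12; rewrite (cdist_rebase c).
have := cdist_lt c b1; have := cdist_lt c b2.
by case: u1; repeat case: ifP => ?; lia.
Qed.

Hypothesis l_gt0 : 0 < l.

(* Two points meet all arcs iff one is the anchor l+1 steps after the other:
   the arcs starting l + u1 and 2l steps before b1 force this. *)
Lemma pair_cover b1 b2 (u1 u2 : bool) :
  (forall c, (cdist c b1 < l + u1) || (cdist c b2 < l + u2)) <->
  (u2 && (cdist b1 b2 == l.+1)) || (u1 && (cdist b2 b1 == l.+1)).
Proof.
split=> [cover|/orP[/andP[-> /eqP d_12]|/andP[-> /eqP d_21]] c].
- have [c1 d1] : exists c, cdist c b1 = l + u1 by apply: cdist_onto; case: (u1); lia.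
  have [c2 d2] : exists c, cdist c b1 = l.*2 by apply: cdist_onto.
  move: (cover c1) (cover c2) (cdist_lt c1 b2) (cdist_lt c2 b2).
  move: (cdist_rebase c1 b1 b2) (cdist_rebase c2 b1 b2) (cdist_rebase c1 b2 b1).
  rewrite d1 d2 => {d1 cover}.
  by case: u1; case: u2; repeat case: ifP => ?; lia.
- exact: cover_by_partner.
- by rewrite orbC; apply: cover_by_partner.
Qed.
End PairCover.

(* Since 2(l+1) = 1 mod 2l+1, the tuple entry w_(k+1) is the anchor of
   clockwise rank pos k = k(l+1) mod 2l+1. *)
Section Positions.
Variable l : nat.
Local Notation m := l.*2.+1.

Definition pos (a : nat) : 'I_m := cshift ord0 (a * l.+1).

Lemma pos_add a k : pos (a + k) = cshift (pos a) (k * l.+1).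
Proof. by rewrite /pos cshiftD mulnDl. Qed.

Lemma pos_succ a : pos a.+1 = cshift (pos a) l.+1.
Proof. by rewrite -[a.+1]addn1 pos_add mul1n. Qed.

Lemma pos_period a : pos (a + m) = pos a.
Proof. by apply: (@cdist_inj _ (pos a)); rewrite pos_add cdist_cshift cdistxx modnMr. Qed.

Lemma pos_pred a : pos a = cshift (pos (a + l.*2)) l.+1.
Proof. by rewrite -pos_succ -addnS pos_period. Qed.

Lemma pos_onto c : exists i : 'I_m, pos i = c.
Proof.
exists (Ordinal (ltn_pmod c.*2 (ltn0Sn l.*2))); apply: ord_inj => /=.
rewrite add0n modnMml (_ : c.*2 * l.+1 = c * m + c); last by lia.
by rewrite modnMDl modn_small.
Qed.

Lemma cdist_pos_arc a : cdist (pos a) (pos (a + l.*2)) = l.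
Proof.
rewrite pos_add cdist_cshift (_ : l.*2 * l.+1 = l * m + l); last by lia.
by rewrite modnMDl modn_small; lia.
Qed.

Lemma cdist_pos_gap a : 0 < l -> cdist (pos (a + l.*2)) (pos a.+1) = 1.
Proof.
move=> l_gt0; rewrite -(pos_period a.+1) (_ : a.+1 + m = a + l.*2 + 2); last by lia.
by rewrite (pos_add (a + l.*2)) cdist_cshift (_ : 2 * l.+1 = 1 + m) ?modnDr ?modn_small //; lia.
Qed.
End Positions.

Lemma existsb_set2 (T : finType) (P : pred T) x y :
  [exists z in [set x; y], P z] = P x || P y.
Proof.
apply/existsP/orP => [[z /andP[/set2P[->|->] Pz]]|[Px|Py]]; [by left|by right|..].
- by exists x; rewrite set21.
- by exists y; rewrite set22.
Qed.

Section SemiValid.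
Variables (n l : nat) (w : 'I_(l.*2.+1) -> 'I_n).
Local Notation m := l.*2.+1.
Local Notation pos := (pos l).

Lemma size_sv_seq : size (sv_seq w) = m.
Proof. by rewrite size_cat !size_map !size_iota addSn addnn. Qed.

Definition anchor (j : 'I_m) : 'I_n := nth (wat w 0) (sv_seq w) j.

Lemma wat_eqmod a b : a = b %[mod m] -> wat w a = wat w b.
Proof. by move=> eq_ab; congr w; apply: ord_inj. Qed.

Lemma anchorE j : anchor j = wat w j.*2.
Proof.
rewrite /anchor /sv_seq nth_cat size_map size_iota ltnS.
have lt_jm := ltn_ord j; case: leqP => le_jl.
  by rewrite (nth_map 0) ?size_iota ?nth_iota // add0n mul2n.
rewrite (nth_map 0) ?size_iota ?nth_iota; try lia.
apply: wat_eqmod; rewrite add0n (_ : j.*2 = 2 * (j - l.+1) + 1 + m) ?modnDr //; lia.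
Qed.

Lemma anchor_wat k : wat w k = anchor (pos k).
Proof.
rewrite anchorE; apply: wat_eqmod => /=.
rewrite add0n -[(_ %% _).*2]mul2n modnMmr (_ : 2 * (k * l.+1) = k * m + k); last by lia.
by rewrite modnMDl.
Qed.

Hypothesis w_sv : semi_valid w.

Lemma anchor_incr (i j : 'I_m) :
  i < j -> cdist (anchor ord0) (anchor i) < cdist (anchor ord0) (anchor j).
Proof.
case/andP: w_sv => _ /(sorted_ltn_nth ltn_trans 0) incr lt_ij.
have := incr i j; rewrite !inE size_map size_sv_seq !(nth_map (wat w 0)) ?size_sv_seq //.
by rewrite [anchor ord0]anchorE; apply.
Qed.

Local Notation block := (block anchor).
Local Notation anchored := (anchored anchor).

Lemma wat_arc (i : nat) x :
  cyc_closed (wat w i) (wat w (i + l.*2)) x = (cdist (pos i) (block x) < l + anchored x).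
Proof. by rewrite !anchor_wat (anchor_arc anchor_incr) cdist_pos_arc. Qed.

(* H2 is the covering problem of PairCover, the arcs being indexed by their
   starting anchor instead of by the tuple. *)
Lemma mem_H2 e : (e \in H2 w) =
  (#|e| == 2) && [forall c : 'I_m, [exists x in e, cdist c (block x) < l + anchored x]].
Proof.
rewrite inE; congr (_ && _); apply/forallP/forallP => cover c.
  have [i <-] := pos_onto c; have /existsP[x /andP[x_e x_arc]] := cover i.
  by apply/existsP; exists x; rewrite x_e -wat_arc.
have /existsP[x /andP[x_e x_arc]] := cover (pos c).
by apply/existsP; exists x; rewrite x_e wat_arc.
Qed.

Definition partner (x : 'I_n) : 'I_n := anchor (cshift (block x) l.+1).

Definition edge (x : 'I_n) : {set 'I_n} := [set x; partner x].

Hypothesis l_gt0 : 0 < l.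

Lemma wat_gap (i : nat) x :
  cyc_open (wat w (i + l.*2)) (wat w i.+1) x = (block x == pos (i + l.*2) :> nat) && ~~ anchored x.
Proof. by rewrite !anchor_wat (anchor_gap anchor_incr) // cdist_pos_gap. Qed.

Lemma cdist_partner x : cdist (block x) (block (partner x)) = l.+1.
Proof. by rewrite /partner (block_anchor anchor_incr) cdist_cshift modn_small // ltnS; lia. Qed.

Lemma partnerP x y : anchored y -> cdist (block x) (block y) = l.+1 -> y = partner x.
Proof.
move=> /eqP y_anchor d_xy; rewrite y_anchor; congr anchor.
by apply: (@cdist_inj _ (block x)); rewrite d_xy cdist_cshift modn_small //; lia.
Qed.

Lemma partner_neq x : x != partner x.
Proof. by apply/eqP => x_px; have := cdist_partner x; rewrite -x_px cdistxx. Qed.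

Lemma partner_wat (i : nat) : partner (wat w i) = wat w i.+1.
Proof. by rewrite /partner !anchor_wat (block_anchor anchor_incr) -pos_succ. Qed.

Lemma partner_gap (i : nat) x : block x = pos (i + l.*2) -> partner x = wat w i.
Proof. by move=> block_x; rewrite /partner anchor_wat (pos_pred l i) block_x. Qed.

Lemma edge_in_H2 x : edge x \in H2 w.
Proof.
rewrite mem_H2 cards2 partner_neq /=; apply/forallP => c.
rewrite existsb_set2 (anchored_anchor anchor_incr).
by apply: cover_by_partner; rewrite cdist_partner.
Qed.

Lemma H2_edge e : e \in H2 w -> exists x, e = edge x.
Proof.
rewrite mem_H2 => /andP[/cards2P[x [y [_ ->]]] /forallP cover].
have /(pair_cover l_gt0) : forall c, (cdist c (block x) < l + anchored x) ||
                                     (cdist c (block y) < l + anchored y).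
  by move=> c; have := cover c; rewrite existsb_set2.
case/orP => /andP[anch /eqP dist].
- by exists x; rewrite /edge -(partnerP anch dist).
- by exists y; rewrite /edge -(partnerP anch dist) setUC.
Qed.

(* Two vertices cannot be each other's partner: 2(l+1) is not 0 mod 2l+1. *)
Lemma edge_inj : injective edge.
Proof.
move=> x y eq_xy.
have /set2P[-> //|y_px] : y \in edge x by rewrite eq_xy set21.
have /set2P[-> //|x_py] : x \in edge y by rewrite -eq_xy set21.
have d_xy : cdist (block x) (block y) = l.+1 by rewrite y_px cdist_partner.
have d_yx : cdist (block y) (block x) = l.+1 by rewrite x_py cdist_partner.
by have := cdist_rebase (block x) (block y) (block x); rewrite d_xy d_yx cdistxx /=; lia.
Qed.

(* The two families of the statement are the edges of anchored, resp.
   unanchored, vertices. *)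
Lemma edge_forms e :
  (exists i : 'I_m, e = [set wat w i; wat w i.+1]) \/
  (exists (i : 'I_m) (v : 'I_n),
     cyc_open (wat w (i + l.*2)) (wat w i.+1) v /\ e = [set v; wat w i])
  <-> exists x, e = edge x.
Proof.
split=> [[[i ->]|[i [v [v_gap ->]]]]|[x ->]].
- by exists (wat w i); rewrite /edge partner_wat.
- exists v; move: v_gap; rewrite wat_gap => /andP[/eqP/ord_inj block_v _].
  by rewrite /edge (partner_gap block_v).
- case: (boolP (anchored x)) => [/eqP x_anchor|not_anchored].
    left; have [i pos_i] := pos_onto (block x); exists i.
    by rewrite /edge x_anchor -pos_i -anchor_wat partner_wat.
  right; have [i pos_i] := pos_onto (cshift (block x) l.+1).
  have block_x : block x = pos (i + l.*2).
    by apply: (@cshift_injl _ _ _ l.+1); rewrite -pos_pred pos_i.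
  exists i, x; split; first by rewrite wat_gap block_x eqxx.
  by rewrite /edge (partner_gap block_x).
Qed.
End SemiValid.

Theorem lemma3p1 (n l : nat) (w : 'I_(l.*2.+1) -> 'I_n) :
  1 <= l -> semi_valid w ->
  (forall e : {set 'I_n},
     e \in H2 w <->
     (exists i : 'I_(l.*2.+1), e = [set wat w i; wat w i.+1]) \/
     (exists (i : 'I_(l.*2.+1)) (v : 'I_n),
        cyc_open (wat w (i + l.*2)) (wat w i.+1) v /\ e = [set v; wat w i]))
  /\ #|H2 w| = n.
Proof.
move=> l_gt0 w_sv.
have H2_edges e : e \in H2 w <-> exists x, e = edge w x.
  by split=> [/(H2_edge w_sv l_gt0)|[x ->]] //; apply: edge_in_H2.
split=> [e|].
  by split=> [/H2_edges/(edge_forms w_sv l_gt0)|/(edge_forms w_sv l_gt0)/H2_edges].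
have -> : H2 w = edge w @: [set: 'I_n].
  apply/setP => e; apply/idP/imsetP => [/H2_edges[x ->]|[x _ ->]]; first by exists x.
  by apply/H2_edges; exists x.
by rewrite card_imset ?cardsT ?card_ord //; apply: (edge_inj w_sv l_gt0).
Qed.
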